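(* Let $(R,[\cdot_\lambda\cdot],\alpha,\beta)$ be a BiHom-Lie conformal superalgebra and let $\alpha',\beta':R\to R$ be two even homomorphisms of conformal algebras (i.e. linear maps commuting with $\partial$ and satisfying $\alpha'([a_\lambda b])=[\alpha'(a)_\lambda\alpha'(b)]$, $\beta'([a_\lambda b])=[\beta'(a)_\lambda\beta'(b)]$) such that any two of the maps $\alpha,\beta,\alpha',\beta'$ commute. Then $(R,[\cdot_\lambda\cdot]',\alpha\circ\alpha',\beta\circ\beta')$, where $[a_\lambda b]'=[\alpha'(a)_\lambda\beta'(b)]$, is a BiHom-Lie conformal superalgebra.
   Context: All spaces are over $\mathbb{C}$. For a $\mathbb{C}[\partial]$-module $V$, $V[\lambda]=\mathbb{C}[\lambda]\otimes V$. $|a|$ denotes the parity of a homogeneous element. In $[x_{-\lambda-\partial}y]$ one writes $[x_\lambda y]=\sum_n\lambda^nc_n$ and replaces $\lambda$ by $-\lambda-\partial$, $\partial$ acting on the $c_n$. A BiHom-Lie conformal superalgebra $(R,[\cdot_\lambda\cdot],\alpha,\beta)$ is a $\mathbb{Z}_2$-graded $\mathbb{C}[\partial]$-module $R=R_0\oplus R_1$ with two commuting linear maps $\alpha,\beta:R\to R$ and a $\mathbb{C}$-linear map $R\otimes R\to R[\lambda]$, $a\otimes b\mapsto[a_\lambda b]$, with $[R_{i\,\lambda}R_j]\subseteq R_{i+j}[\lambda]$, such that for all homogeneous $a,b,c\in R$: (1) $\alpha\partial=\partial\alpha$, $\beta\partial=\partial\beta$; (2) $\alpha([a_\lambda b])=[\alpha(a)_\lambda\alpha(b)]$,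 $\beta([a_\lambda b])=[\beta(a)_\lambda\beta(b)]$; (3) $[(\partial a)_\lambda b]=-\lambda[a_\lambda b]$, $[a_\lambda(\partial b)]=(\partial+\lambda)[a_\lambda b]$; (4) $[\beta(a)_\lambda\alpha(b)]=-(-1)^{|a||b|}[\beta(b)_{-\lambda-\partial}\alpha(a)]$; (5) $[\alpha\beta(a)_\lambda[b_\mu c]]=[[\beta(a)_\lambda b]_{\lambda+\mu}\beta(c)]+(-1)^{|a||b|}[\beta(b)_\mu[\alpha(a)_\lambda c]]$. *)

From mathcomp Require Import all_boot all_algebra.
From mathcomp Require Import complex.
From mathcomp Require Import Rstruct.

Set Implicit Arguments.
Unset Strict Implicit.
Unset Printing Implicit Defensive.

Import GRing.Theory.
Local Open Scope ring_scope.

Definition Cc : fieldType := complex Rdefinitions.R.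

Section BiHomLCSA.
Variables (K : fieldType) (V : lmodType K).

(* Elements of V[lambda] are represented by their (finite) coefficient list:
   s represents  sum_n lambda^n s`_n . Two such lists represent the same
   polynomial iff all their coefficients (nth 0) agree. *)
Definition coef (s : seq V) (n : nat) : V := nth 0 s n.

Definition is_lin (f : V -> V) : Prop :=
  forall (c : K) (x y : V), f (c *: x + y) = c *: f x + f y.

(* Z_2-graded C[d]-module: d linear, V = V_0 (+) V_1 with each V_i a
   C[d]-submodule. [P p x] means x is homogeneous of parity p
   (false = even = 0, true = odd = 1). *)
Definition Z2graded_Cd_module (d : V -> V) (P : bool -> V -> Prop) : Prop :=
  [/\ is_lin d,
      (forall p, P p 0 /\ forall (c : K) x y, P p x -> P p y -> P p (c *: x + y)),
      (forall p x, P p x -> P p (d x)),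
      (forall v, exists v0 v1, [/\ P false v0, P true v1 & v = v0 + v1]) &
      (forall v, P false v -> P true v -> v = 0)].

(* [x_{-lambda-d} y] : given s = [x_lambda y] = sum_n lambda^n c_n, the
   coefficient of lambda^k in sum_n (-lambda-d)^n c_n, i.e.
   sum_n (-1)^n binom(n,k) d^(n-k) c_n. *)
Definition subst_neg (d : V -> V) (s : seq V) (k : nat) : V :=
  \sum_(n < size s) (((-1) ^+ n * ('C(n, k))%:R) *: iter (n - k) d (coef s n)).

(* Coefficient of lambda^i mu^j in [x_lambda [b_mu c]] where s = [b_mu c]. *)
Definition jac_left (br : V -> V -> seq V) (x : V) (s : seq V) (i j : nat) : V :=
  coef (br x (coef s j)) i.

(* Coefficient of lambda^i mu^j in [e_{lambda+mu} y] where e = [a_lambda b]: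
   sum_n lambda^n sum_m (lambda+mu)^m [e_n _ y]_m. *)
Definition jac_mid (br : V -> V -> seq V) (e : seq V) (y : V) (i j : nat) : V :=
  \sum_(n < i.+1) (('C(i - n + j, j))%:R *: coef (br (coef e n) y) (i - n + j)).

(* Coefficient of lambda^i mu^j in [x_mu [a_lambda c]] where g = [a_lambda c]. *)
Definition jac_right (br : V -> V -> seq V) (x : V) (g : seq V) (i j : nat) : V :=
  coef (br x (coef g i)) j.

Definition BiHomLieConfSuperalg (d : V -> V) (P : bool -> V -> Prop)
    (br : V -> V -> seq V) (al be : V -> V) : Prop :=
  [/\ Z2graded_Cd_module d P,
      is_lin al /\ is_lin be /\ (forall x, al (be x) = be (al x)),
      (forall (c : K) x y b n,
          coef (br (c *: x + y) b) n = c *: coef (br x b) n + coef (br y b) n) /\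
      (forall (c : K) a x y n,
          coef (br a (c *: x + y)) n = c *: coef (br a x) n + coef (br a y) n),
      (forall p q a b n, P p a -> P q b -> P (p (+) q) (coef (br a b) n)) &
      (forall pa pb pc a b c, P pa a -> P pb b -> P pc c ->
        [/\
            al (d a) = d (al a) /\ be (d a) = d (be a),
            (forall n, al (coef (br a b) n) = coef (br (al a) (al b)) n) /\
            (forall n, be (coef (br a b) n) = coef (br (be a) (be b)) n),
            (forall n, coef (br (d a) b) n = - coef (0 :: br a b) n) /\
            (forall n, coef (br a (d b)) n = d (coef (br a b) n) + coef (0 :: br a b) n),
            (forall k, coef (br (be a) (al b)) k =
                 - ((-1) ^+ (pa && pb) *: subst_neg d (br (be b) (al a)) k)) &
            (forall i j, jac_left br (al (be a)) (br b c) i j =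
                 jac_mid br (br (be a) b) (be c) i j
                 + (-1) ^+ (pa && pb) *: jac_right br (be b) (br (al a) c) i j)])].

End BiHomLCSA.

(* Because alpha' and beta' are even homomorphisms commuting with alpha and
   beta, every axiom for the bracket [alpha' a _lambda beta' b] with structure
   maps alpha alpha', beta beta' is the corresponding axiom of R at homogeneous
   elements obtained by applying alpha' and beta' (for the Jacobi identity at
   alpha' alpha' beta' a, beta' alpha' b and beta' beta' c).  The two sides then
   differ only in the order in which the four pairwise commuting maps are
   composed. *)
From mathcomp Require Import all_boot all_algebra.
From mathcomp Require Import complex.

Set Implicit Arguments.
Unset Strict Implicit.

Local Open Scope ring_scope.

Section Twist.
Variables (K : fieldType) (V : lmodType K).

Lemma is_lin_comp (f g : V -> V) : is_lin f -> is_lin g -> is_lin (f \o g).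
Proof. by move=> linf ling c x y /=; rewrite ling linf. Qed.

Variables (d : V -> V) (P : bool -> V -> Prop) (br : V -> V -> seq V).

Definition br_morph (f : V -> V) : Prop :=
  forall a b n, f (coef (br a b) n) = coef (br (f a) (f b)) n.

Definition even_conf_hom (f : V -> V) : Prop :=
  [/\ is_lin f, forall p x, P p x -> P p (f x), forall x, f (d x) = d (f x)
    & br_morph f].

Variables (al be al' be' : V -> V).

Definition twist_br (a b : V) : seq V := br (al' a) (be' b).

Lemma jac_left_twist (be'_br : br_morph be') x b c i j :
  jac_left twist_br x (twist_br b c) i j
  = jac_left br (al' x) (br (be' (al' b)) (be' (be' c))) i j.
Proof. by rewrite /jac_left /twist_br be'_br. Qed.

Lemma jac_mid_twist (al'_br : br_morph al') a b y i j :
  jac_mid twist_br (twist_br a b) y i j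
  = jac_mid br (br (al' (al' a)) (al' (be' b))) (be' y) i j.
Proof. by apply: eq_bigr => n _; rewrite /twist_br al'_br. Qed.

Lemma jac_right_twist (be'_br : br_morph be') x a c i j :
  jac_right twist_br x (twist_br a c) i j
  = jac_right br (al' x) (br (be' (al' a)) (be' (be' c))) i j.
Proof. by rewrite /jac_right /twist_br be'_br. Qed.

Hypothesis bihom : BiHomLieConfSuperalg d P br al be.
Hypotheses (al'_hom : even_conf_hom al') (be'_hom : even_conf_hom be').
Hypotheses (alC_be : forall x, al (be x) = be (al x))
  (alC_al' : forall x, al (al' x) = al' (al x))
  (alC_be' : forall x, al (be' x) = be' (al x))
  (beC_al' : forall x, be (al' x) = al' (be x))
  (beC_be' : forall x, be (be' x) = be' (be x))
  (al'C_be' : forall x, al' (be' x) = be' (al' x)).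

(* Oriented towards the normal form be' (al' (be (al x))): rewriting with it
   terminates and sorts every composite of the four maps. *)
Let commE := (alC_be, alC_al', alC_be', beC_al', beC_be', al'C_be').

Let al'_lin : is_lin al'. Proof. by case: al'_hom. Qed.
Let be'_lin : is_lin be'. Proof. by case: be'_hom. Qed.
Let al'_par p x : P p x -> P p (al' x). Proof. by case: al'_hom => _ /(_ p x). Qed.
Let be'_par p x : P p x -> P p (be' x). Proof. by case: be'_hom => _ /(_ p x). Qed.
Let al'_d x : al' (d x) = d (al' x). Proof. by case: al'_hom. Qed.
Let be'_d x : be' (d x) = d (be' x). Proof. by case: be'_hom. Qed.
Let al'_br : br_morph al'. Proof. by case: al'_hom. Qed.
Let be'_br : br_morph be'. Proof. by case: be'_hom. Qed.

Lemma twist_br_bilinear :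
  (forall (c : K) x y b n, coef (twist_br (c *: x + y) b) n
     = c *: coef (twist_br x b) n + coef (twist_br y b) n) /\
  (forall (c : K) a x y n, coef (twist_br a (c *: x + y)) n
     = c *: coef (twist_br a x) n + coef (twist_br a y) n).
Proof.
case: bihom => _ _ [linl linr] _ _.
by split=> c *; rewrite /twist_br (al'_lin, be'_lin) (linl, linr).
Qed.

Lemma twist_br_parity p q a b n :
  P p a -> P q b -> P (p (+) q) (coef (twist_br a b) n).
Proof. by case: bihom => _ _ _ par _ /al'_par Pa /be'_par Pb; exact: par. Qed.

Section Homogeneous.
Variables (pa pb pc : bool) (a b c : V).
Hypotheses (Pa : P pa a) (Pb : P pb b) (Pc : P pc c).

Lemma twist_comm_d :
  al (al' (d a)) = d (al (al' a)) /\ be (be' (d a)) = d (be (be' a)).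
Proof.
have [_ _ _ _ ax] := bihom.
have [[al_d _] _ _ _ _] := ax _ _ _ _ _ _ (al'_par Pa) Pa Pa.
have [[_ be_d] _ _ _ _] := ax _ _ _ _ _ _ (be'_par Pa) Pa Pa.
by rewrite al'_d be'_d al_d be_d.
Qed.

Lemma twist_multiplicative :
  (forall n, al (al' (coef (twist_br a b) n))
     = coef (twist_br (al (al' a)) (al (al' b))) n) /\
  (forall n, be (be' (coef (twist_br a b) n))
     = coef (twist_br (be (be' a)) (be (be' b))) n).
Proof.
have [_ _ _ _ ax] := bihom.
have [_ [al_br _] _ _ _] :=
  ax _ _ _ _ _ _ (al'_par (al'_par Pa)) (al'_par (be'_par Pb)) Pa.
have [_ [_ be_br] _ _ _] :=
  ax _ _ _ _ _ _ (be'_par (al'_par Pa)) (be'_par (be'_par Pb)) Pa.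
by split=> n; rewrite /twist_br (al'_br, be'_br) (al_br, be_br) ?commE.
Qed.

Lemma twist_sesquilinear :
  (forall n, coef (twist_br (d a) b) n = - coef (0 :: twist_br a b) n) /\
  (forall n, coef (twist_br a (d b)) n
     = d (coef (twist_br a b) n) + coef (0 :: twist_br a b) n).
Proof.
have [_ _ _ _ ax] := bihom.
have [_ _ [dl dr] _ _] := ax _ _ _ _ _ _ (al'_par Pa) (be'_par Pb) Pa.
by split=> n; rewrite /twist_br (al'_d, be'_d) (dl, dr).
Qed.

Lemma twist_skew k :
  coef (twist_br (be (be' a)) (al (al' b))) k
  = - ((-1) ^+ (pa && pb) *: subst_neg d (twist_br (be (be' b)) (al (al' a))) k).
Proof.
have [_ _ _ _ ax] := bihom.
have [_ _ _ skew _] := ax _ _ _ _ _ _ (al'_par (be'_par Pa)) (be'_par (al'_par Pb)) Pa.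
by have := skew k; rewrite /twist_br ?commE.
Qed.

Lemma twist_jacobi i j :
  jac_left twist_br (al (al' (be (be' a)))) (twist_br b c) i j
  = jac_mid twist_br (twist_br (be (be' a)) b) (be (be' c)) i j
    + (-1) ^+ (pa && pb) *:
      jac_right twist_br (be (be' b)) (twist_br (al (al' a)) c) i j.
Proof.
have [_ _ _ _ ax] := bihom.
have [_ _ _ _ jacobi] := ax _ _ _ _ _ _
  (al'_par (al'_par (be'_par Pa))) (be'_par (al'_par Pb)) (be'_par (be'_par Pc)).
rewrite jac_left_twist // jac_mid_twist // jac_right_twist //.
by have := jacobi i j; rewrite ?commE.
Qed.

End Homogeneous.

Theorem twist_BiHomLieConfSuperalg :
  BiHomLieConfSuperalg d P twist_br (al \o al') (be \o be').
Proof.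
have [graded [al_lin [be_lin _]] _ _ _] := bihom.
split=> //.
- split; first exact: is_lin_comp.
  by split=> [|x /=]; [exact: is_lin_comp | rewrite ?commE].
- exact: twist_br_bilinear.
- exact: twist_br_parity.
- move=> pa pb pc a b c Pa Pb Pc; split.
  + exact: twist_comm_d Pa.
  + exact: twist_multiplicative Pa Pb.
  + exact: twist_sesquilinear Pa Pb.
  + exact: twist_skew Pa Pb.
  + exact: twist_jacobi Pa Pb Pc.
Qed.

End Twist.

Theorem mainTheorem2 (V : lmodType Cc) (d : V -> V) (P : bool -> V -> Prop)
    (br : V -> V -> seq V) (al be al' be' : V -> V) :
  BiHomLieConfSuperalg d P br al be ->
  (* al', be' : even homomorphisms of conformal algebras *)
  is_lin al' -> is_lin be' ->
  (forall p x, P p x -> P p (al' x)) -> (forall p x, P p x -> P p (be' x)) ->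
  (forall x, al' (d x) = d (al' x)) -> (forall x, be' (d x) = d (be' x)) ->
  (forall a b n, al' (coef (br a b) n) = coef (br (al' a) (al' b)) n) ->
  (forall a b n, be' (coef (br a b) n) = coef (br (be' a) (be' b)) n) ->
  (* any two of al, be, al', be' commute *)
  (forall x, al (be x) = be (al x)) ->
  (forall x, al (al' x) = al' (al x)) ->
  (forall x, al (be' x) = be' (al x)) ->
  (forall x, be (al' x) = al' (be x)) ->
  (forall x, be (be' x) = be' (be x)) ->
  (forall x, al' (be' x) = be' (al' x)) ->
  BiHomLieConfSuperalg d P (fun a b => br (al' a) (be' b))
    (fun x => al (al' x)) (fun x => be (be' x)).
Proof.
move=> bihom al'_lin be'_lin al'_par be'_par al'_d be'_d al'_br be'_br.
have al'_hom : even_conf_hom d P br al' by [].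
have be'_hom : even_conf_hom d P br be' by [].
exact: twist_BiHomLieConfSuperalg.
Qed.
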